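(* Let $\sigma_a,\sigma_b$ be reasonable strategies of player $0$ in the escape arena $\mathcal{A}_\bot$ with $\sigma_a\subseteq\sigma_b$. Then $\mathcal{V}_{\sigma_a}\preceq\mathcal{V}_{\sigma_b}$, i.e. $\mathcal{V}_{\sigma_a}(s)\preceq\mathcal{V}_{\sigma_b}(s)$ for all vertices $s$.
   Context: Parity game arena: $\mathcal{A}=(V,E,o,c)$ with $V$ finite, $E\subseteq V\times V$, every vertex has a successor, owner map $o:V\to\{0,1\}$, colouring $c:V\to\{0,\dots,d-1\}$; $V_i=o^{-1}(i)$. An infinite vertex sequence is won by player $0$ iff the largest colour occurring infinitely often is even. A cycle is $i$-dominated if its largest colour has parity $i$. Escape arena $\mathcal{A}_\bot$: vertices $V\cup\{\bot\}$, edges $E\cup(V_0\times\{\bot\})$, $\bot$ owned by player $0$ with no outgoing edges. $E_0$ = edges of $\mathcal{A}_\bot$ leaving $V_0$, $E_1=E\cap(V_1\times V)$. A strategy of player $i$ is a set $\sigma\subseteq E_i$ with $s\sigma\neq\emptyset$ for all $s\in V_i$. $\mathcal{A}_\bot|_{\sigma,\tau}$ has edges $\sigma\cup\tau$, $\mathcal{A}_\bot|_\sigma$ has edges $\sigma\cup E_1$; plays are maximal paths. Colour profiles $\mathcal{P}=\mathbb{Z}^d\cup\{-\infty,\infty\}$, $\text{\o}$ zero vector; $\wp(s)$ unit vector at coordinate $c(s)$; for a finite path the sum over vertices in $V$; infinite play: $\infty$ if won by player $0$, else $-\infty$. Order $\prec$: $-\infty$ least, $\infty$ greatest; for distinct $p,p'\in\mathbb{Z}^d$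 with $k$ the largest differing index, $p\prec p'$ iff ($k$ even, $p_k<p'_k$) or ($k$ odd, $p_k>p'_k$). Valuation: $\mathcal{V}_\sigma(\bot)=\text{\o}$, $\mathcal{V}_\sigma(s)=\min^\prec_\tau\max^\prec\{\wp(\pi)\mid\pi$ a play in $\mathcal{A}_\bot|_{\sigma,\tau}$ from $s\}$, min over player-$1$ strategies $\tau$. $\sigma$ is reasonable if $\mathcal{A}_\bot|_\sigma$ has no $1$-dominated cycle. *)

From mathcomp Require Import all_boot all_order all_algebra.
From Stdlib Require Import ClassicalEpsilon.
Set Implicit Arguments. Unset Strict Implicit. Unset Printing Implicit Defensive.
Import GRing.Theory Num.Theory Order.TTheory.

(* A parity game arena (V,E,o,c) with colours in {0,...,d-1}.
   owner v = false : v belongs to player 0;  owner v = true : player 1. *)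
Record arena (d : nat) := Arena {
  vert : finType;
  edge : rel vert;
  owner : vert -> bool;
  colour : vert -> 'I_d;
  edge_total : forall v, exists w, edge v w }.
Arguments vert {d} a.
Arguments edge {d} a _ _.
Arguments owner {d} a _.
Arguments colour {d} a _.

Inductive profile (d : nat) :=
  NegInf | Fin of {ffun 'I_d -> int} | PosInf.
Arguments NegInf {d}.
Arguments PosInf {d}.

Section Profiles.
Variable d : nat.
Local Open Scope ring_scope.

Definition fin_lt (p q : {ffun 'I_d -> int}) : Prop :=
  exists k : 'I_d, p k != q k /\ (forall j : 'I_d, (k < j)%N -> p j = q j) /\
    (if odd k then q k < p k else p k < q k).

Definition prof_lt (a b : profile d) : Prop :=
  match a, b with
  | NegInf, NegInf => False
  | NegInf, _ => True
  | Fin _, NegInf => False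
  | Fin p, Fin q => fin_lt p q
  | Fin _, PosInf => True
  | PosInf, _ => False
  end.

Definition prof_le (a b : profile d) : Prop := a = b \/ prof_lt a b.

(* maximum / minimum (w.r.t. the profile order) of a set of profiles;
   chosen classically; it is the max/min whenever one exists *)
Definition is_max (S : profile d -> Prop) (m : profile d) :=
  S m /\ forall q, S q -> prof_le q m.
Definition is_min (S : profile d -> Prop) (m : profile d) :=
  S m /\ forall q, S q -> prof_le m q.
Definition pmax (S : profile d -> Prop) : profile d :=
  epsilon (inhabits NegInf) (is_max S).
Definition pmin (S : profile d -> Prop) : profile d :=
  epsilon (inhabits NegInf) (is_min S).
End Profiles.

Section Escape.
Variables (d : nat) (A : arena d).
Local Notation V := (vert A).
(* vertices of the escape arena: Some v for v in V, None for bottom *)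
Local Notation VB := (option V).
Local Open Scope ring_scope.

Definition esc_edge (x y : VB) : bool :=
  match x, y with
  | Some u, Some v => edge A u v
  | Some u, None => ~~ owner A u
  | None, _ => false
  end.

Definition E0 : {set VB * VB} :=
  [set e | if e.1 is Some u then ~~ owner A u && esc_edge e.1 e.2 else false].
Definition E1 : {set VB * VB} :=
  [set e | match e with
           | (Some u, Some v) => owner A u && edge A u v
           | _ => false end].

Definition strategy0 (sigma : {set VB * VB}) : Prop :=
  sigma \subset E0 /\ forall u : V, ~~ owner A u -> exists y, (Some u, y) \in sigma.
Definition strategy1 (tau : {set VB * VB}) : Prop :=
  tau \subset E1 /\ forall u : V, owner A u -> exists y, (Some u, y) \in tau.

Definition rel_of (F : {set VB * VB}) : rel VB := fun x y => (x, y) \in F.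

Definition finite_play (F : {set VB * VB}) (s : VB) (p : seq VB) : Prop :=
  path (rel_of F) s p /\ forall y, ~~ rel_of F (last s p) y.
Definition infinite_play (F : {set VB * VB}) (s : VB) (f : nat -> VB) : Prop :=
  f 0%N = s /\ forall n, rel_of F (f n) (f n.+1).

Definition unitp (x : VB) : {ffun 'I_d -> int} :=
  if x is Some v then [ffun i => ((colour A v == i) : nat)%:Z] else 0.
Definition seq_profile (p : seq VB) : profile d := Fin (\sum_(x <- p) unitp x).

Definition inf_often (f : nat -> VB) (k : 'I_d) : Prop :=
  forall n, exists m, (n <= m)%N /\ exists v, f m = Some v /\ colour A v = k.
Definition won0 (f : nat -> VB) : Prop :=
  exists k : 'I_d, inf_often f k /\ ~~ odd k /\
    forall j : 'I_d, inf_often f j -> (j <= k)%N.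

Definition play_profiles (F : {set VB * VB}) (s : VB) (q : profile d) : Prop :=
  (exists p, finite_play F s p /\ q = seq_profile (s :: p)) \/
  (exists f, infinite_play F s f /\
     ((won0 f /\ q = PosInf) \/ (~ won0 f /\ q = NegInf))).

Definition valuation (sigma : {set VB * VB}) (x : VB) : profile d :=
  match x with
  | None => Fin 0
  | Some v => pmin (fun q => exists tau, strategy1 tau /\
                       q = pmax (play_profiles (sigma :|: tau) (Some v)))
  end.

Definition cycle_colour (c : seq VB) : nat :=
  \max_(x <- c) (if x is Some v then val (colour A v) else 0%N).

Definition reasonable (sigma : {set VB * VB}) : Prop :=
  forall c : seq VB, c != [::] -> cycle (rel_of (sigma :|: E1)) c ->
    ~~ odd (cycle_colour c).
End Escape.

From mathcomp Require Import all_boot all_order all_algebra.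
From Stdlib Require Import Classical ClassicalEpsilon.
Set Implicit Arguments. Unset Strict Implicit. Unset Printing Implicit Defensive.
Import Order.TTheory.

(* Fix a strategy tau of player 1. Every play of A_bot|sa,tau is a play of
   A_bot|sb,tau: the edges only grow, and a finite play stays maximal because it
   ends in bot, every vertex of V having a successor in both graphs. Hence the
   maximal play profile can only grow from sa to sb, and for tau optimal against
   sb we get V_sa <= max over A_bot|sa,tau <= max over A_bot|sb,tau = V_sb.
   The maxima exist because the strategies are reasonable: a play revisiting a
   vertex yields a lasso, whose loop is an even-dominated cycle, i.e. a play of
   profile +oo; otherwise all plays are simple paths, of which there are finitely
   many. The minima exist because there are finitely many strategies tau. *)

Section ProfileOrder.
Variable d : nat.
Local Open Scope ring_scope.

Lemma fin_lt_trans (p q r : {ffun 'I_d -> int}) :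
  fin_lt p q -> fin_lt q r -> fin_lt p r.
Proof.
move=> [k1 [n1 [e1 c1]]] [k2 [n2 [e2 c2]]].
have [lt12|lt21|/val_inj eq12] := ltngtP k1 k2.
- exists k2; rewrite (e1 _ lt12); split=> //; split=> // j hj.
  by rewrite e1 ?e2 //; apply: ltn_trans hj.
- exists k1; rewrite -(e2 _ lt21); split=> //; split=> // j hj.
  by rewrite e1 ?e2 //; apply: ltn_trans hj.
- subst k2; have c : if odd k1 then r k1 < p k1 else p k1 < r k1.
    by case: (odd k1) c1 c2 => h1 h2; [exact: lt_trans h2 h1 | exact: lt_trans h1 h2].
  exists k1; split; last by split=> // j hj; rewrite e1 ?e2.
  by case: (odd k1) c => c; [rewrite (gt_eqF c) | rewrite (lt_eqF c)].
Qed.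

Lemma prof_le_trans (a b c : profile d) :
  prof_le a b -> prof_le b c -> prof_le a c.
Proof.
move=> [->|hab] [<-|hbc]; rewrite /prof_le; auto.
right; move: a b c hab hbc => [|p|] [|q|] [|r|] //=; exact: fin_lt_trans.
Qed.

Lemma fin_lt_total (p q : {ffun 'I_d -> int}) :
  p = q \/ fin_lt p q \/ fin_lt q p.
Proof.
case: (boolP [exists k, p k != q k]) => [/existsP [i hi]|]; last first.
  move=> hn; left; apply/ffunP => k; apply/eqP; apply: contraNT hn => hk.
  by apply/existsP; exists k.
pose k := [arg max_(k > i | p k != q k) val k].
have [hk he] : p k != q k /\ forall j : 'I_d, (k < j)%N -> p j = q j.
  rewrite /k; case: arg_maxnP => //= m hm hmax; split=> // j hj.
  by apply/eqP; apply: contraTT hj => /hmax; rewrite -leqNgt.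
have he' (j : 'I_d) : (k < j)%N -> q j = p j by move/he.
right; case: ltgtP hk => // h _; case ok: (odd k);
  [right|left|left|right]; exists k; rewrite ok;
  split; rewrite ?(gt_eqF h) ?(lt_eqF h) //.
Qed.

Lemma prof_le_total (a b : profile d) : prof_le a b \/ prof_le b a.
Proof.
rewrite /prof_le; move: a b => [|p|] [|q|] /=; try tauto.
by case: (fin_lt_total p q) => [->|[]]; tauto.
Qed.

Lemma prof_le_PosInf (a : profile d) : prof_le a PosInf.
Proof. by rewrite /prof_le; case: a => [|p|] /=; auto. Qed.

Lemma is_max_pmax (S : profile d -> Prop) m : is_max S m -> is_max S (pmax S).
Proof. by move=> h; apply: epsilon_spec; exists m. Qed.

Lemma is_min_pmin (S : profile d -> Prop) m : is_min S m -> is_min S (pmin S).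
Proof. by move=> h; apply: epsilon_spec; exists m. Qed.

Lemma is_max_le (S S' : profile d -> Prop) m m' :
  (forall q, S q -> S' q) -> is_max S m -> is_max S' m' -> prof_le m m'.
Proof. by move=> sub [Sm _] [_ max']; apply/max'/sub. Qed.
End ProfileOrder.

Section Extremum.
Variables (T : finType) (U : Type) (R : U -> U -> Prop).
Hypothesis R_total : forall a b, R a b \/ R b a.
Hypothesis R_trans : forall a b c, R a b -> R b c -> R a c.
Variables (P : T -> Prop) (g : T -> U).

Lemma seq_extremum (L : seq T) : (exists2 x, x \in L & P x) ->
  exists x, P x /\ forall y, y \in L -> P y -> R (g y) (g x).
Proof.
have R_refl a : R a a by case: (R_total a a).
elim: L => [[x //]|a L IH hex].
have [/IH [m [Pm m_max]]|noL] := classic (exists2 x, x \in L & P x); last first.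
  have Pa : P a.
    by case: hex => x; rewrite inE => /predU1P [<- //|xL Px]; case: noL; exists x.
  exists a; split=> // y; rewrite inE => /predU1P [-> _|yL Py]; first exact: R_refl.
  by case: noL; exists y.
have [[Pa Rma]|not_a] := classic (P a /\ R (g m) (g a)).
  exists a; split=> // y; rewrite inE => /predU1P [-> _|yL Py]; first exact: R_refl.
  exact: R_trans (m_max y yL Py) Rma.
exists m; split=> // y; rewrite inE => /predU1P [-> Pa|]; last exact: m_max.
by case: (R_total (g a) (g m)) => // Rma; case: not_a.
Qed.

Lemma finite_extremum : (exists x, P x) ->
  exists x, P x /\ forall y, P y -> R (g y) (g x).
Proof.
move=> [x Px]; have [|m [Pm m_max]] := @seq_extremum (enum T).
  by exists x; rewrite ?mem_enum.
by exists m; split=> // y; apply: m_max; rewrite mem_enum.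
Qed.
End Extremum.

Lemma bigmax_seq_attained (T : eqType) (F : T -> nat) x c :
  exists2 y, y \in x :: c & \max_(z <- x :: c) F z = F y.
Proof.
elim: c x => [|b c IH] x; first by exists x; rewrite ?mem_head // big_seq1.
have [y y_bc max_y] := IH b; rewrite big_cons max_y.
case: (leqP (F x) (F y)) => h.
- by exists y; rewrite // inE y_bc orbT.
- by exists x; rewrite ?mem_head.
Qed.

Lemma cycle_nth_mod (T : Type) (e : rel T) x0 x c k :
  cycle e (x :: c) ->
  e (nth x0 (x :: c) (k %% (size c).+1)) (nth x0 (x :: c) (k.+1 %% (size c).+1)).
Proof.
move=> /= loop; rewrite -[k.+1]addn1 -modnDml addn1.
have : k %% (size c).+1 < (size c).+1 by rewrite ltn_mod.
move: (k %% _) => i lti; have := pathP x0 loop i; rewrite size_rcons => /(_ lti).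
rewrite -rcons_cons nth_rcons lti nth_rcons.
case: (ltnP i (size c)) => [lt_ic|le_ci]; first by rewrite modn_small.
have ci : i = size c by apply/anti_leq; rewrite le_ci andbT -ltnS.
by rewrite ci eqxx modnn.
Qed.

Section Lasso.
Variables (T : eqType) (e : rel T).

Definition lasso (s : T) := exists p c, path e s p /\ cycle e (last s p :: c).

Lemma lasso_of_not_uniq s p : path e s p -> ~~ uniq (s :: p) -> lasso s.
Proof.
elim: p s => [//|y p IH] s /= /andP [e_sy yp].
case: (boolP (s \in y :: p)) => [s_yp _|s_yp /= /(IH _ yp) [q [c [yq loop]]]].
  have : path e s (y :: p) by rewrite /= e_sy.
  case/splitPr: s_yp => p1 p2; rewrite cat_path => /andP [sp1 /= /andP [ep1s _]].
  by exists [::], p1; rewrite /= rcons_path sp1.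
by exists (y :: q), c; rewrite /= e_sy.
Qed.

Lemma path_map_iota (f : nat -> T) m n :
  (forall i, i < m + n -> e (f i) (f i.+1)) ->
  path e (f m) [seq f i | i <- iota m.+1 n].
Proof.
elim: n m => [//|n IH] m ef /=.
rewrite ef ?addnS ?ltnS ?leq_addr //; apply: IH => i lti; apply: ef.
by rewrite addnS -addSn.
Qed.

Lemma last_map_iota (f : nat -> T) m n :
  last (f m) [seq f i | i <- iota m.+1 n] = f (m + n).
Proof. by elim: n m => [|n IH] m /=; rewrite ?addn0 // IH addnS. Qed.

Variables (s : T) (p c : seq T).
Local Notation loop := (last s p :: c).

Definition lasso_walk n :=
  if n < size p then nth s (s :: p) n else nth s loop ((n - size p) %% size loop).

Lemma lasso_walk_stem n : n <= size p -> lasso_walk n = nth s (s :: p) n.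
Proof.
rewrite /lasso_walk leq_eqVlt => /predU1P [->|-> //].
by rewrite ltnn subnn mod0n -[size p]/((size (s :: p)).-1) nth_last.
Qed.

Lemma lasso_walk_loop k : lasso_walk (size p + k) = nth s loop (k %% size loop).
Proof. by rewrite /lasso_walk ltnNge leq_addr addKn. Qed.

Lemma lasso_walk0 : lasso_walk 0 = s.
Proof. by rewrite lasso_walk_stem. Qed.

Lemma lasso_walk_step : path e s p -> cycle e loop ->
  forall n, e (lasso_walk n) (lasso_walk n.+1).
Proof.
move=> stem cyc n; case: (ltnP n (size p)) => [ltn|len].
  rewrite (lasso_walk_stem (ltnW ltn)) (lasso_walk_stem ltn).
  by move/(pathP s): stem; apply.
by rewrite -(subnKC len) -addnS !lasso_walk_loop; apply: cycle_nth_mod.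
Qed.

Lemma lasso_walk_tail n : size p <= n -> lasso_walk n \in loop.
Proof. by move/subnKC <-; rewrite lasso_walk_loop mem_nth // ltn_mod. Qed.

Lemma lasso_walk_recurrent y : y \in loop ->
  forall n, exists2 m, n <= m & lasso_walk m = y.
Proof.
move=> y_loop n; exists (size p + (n * size loop + index y loop)).
  by rewrite (leq_trans _ (leq_addl _ _)) // (leq_trans _ (leq_addr _ _)) // leq_pmulr.
by rewrite lasso_walk_loop modnMDl modn_small ?index_mem ?nth_index.
Qed.
End Lasso.

Lemma walk_lasso (T : finType) (e : rel T) (f : nat -> T) :
  (forall n, e (f n) (f n.+1)) -> lasso e (f 0).
Proof.
move=> ef; apply: (@lasso_of_not_uniq _ _ _ [seq f i | i <- iota 1 #|T|]).
  exact: (@path_map_iota _ _ _ 0).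
apply/negP => /card_uniqP card_walk.
have := max_card (mem (f 0 :: [seq f i | i <- iota 1 #|T|])).
by rewrite card_walk /= size_map size_iota ltnn.
Qed.

Section Plays.
Variables (d : nat) (A : arena d) (F : {set option (vert A) * option (vert A)}).
Local Notation VB := (option (vert A)).
Local Notation r := (rel_of F).

Definition vcolour (x : VB) : nat := if x is Some v then val (colour A v) else 0.

Lemma finite_play_exists s :
  (forall f, ~ infinite_play F s f) -> exists p, finite_play F s p.
Proof.
move=> no_inf; pose f n := iter n (fun x => odflt x [pick y | r x y]) s.
pose stuck n := [forall y, ~~ r (f n) y].
have f_step i : ~~ stuck i -> r (f i) (f i.+1).
  rewrite negb_forall => /existsP [y /negPn ry]; rewrite /f iterS; case: pickP => //.
  by move/(_ y); rewrite ry.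
have [[n stuck_n]|never_stuck] := classic (exists n, stuck n); last first.
  case: (no_inf f); split=> // n; apply: f_step.
  by apply/negP => stuck_n; apply: never_stuck; exists n.
have [n0 stuck_n0 n0_min] := find_ex_minn (ex_intro _ n stuck_n).
exists [seq f i | i <- iota 1 n0]; split.
  apply: (@path_map_iota _ _ _ 0) => i lti; apply: f_step.
  by apply/negP => /n0_min; rewrite leqNgt lti.
by move=> y; rewrite (last_map_iota f 0) add0n; move/forallP: stuck_n0.
Qed.

Hypothesis no_edge_from_bot : forall y, ~~ r None y.
Hypothesis cycles_even :
  forall c : seq VB, c != [::] -> cycle r c -> ~~ odd (cycle_colour c).

Lemma lasso_won s : lasso r s -> play_profiles F s PosInf.
Proof.
move=> [p [c [stem loop]]]; set cyc := last s p :: c in loop.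
have cyc_Some y : y \in cyc -> exists v, y = Some v.
  case: y => [v _|bot_cyc]; first by exists v.
  by have := next_cycle loop bot_cyc; rewrite (negbTE (no_edge_from_bot _)).
have [y0 y0_cyc max_y0] := bigmax_seq_attained vcolour (last s p) c.
have [v0 y0_v0] := cyc_Some y0 y0_cyc; subst y0.
right; exists (lasso_walk s p c); split.
  by split; [exact: lasso_walk0 | exact: lasso_walk_step].
left; split=> //; exists (colour A v0); split; last split.
- move=> n; have [m le_nm walk_m] := lasso_walk_recurrent y0_cyc n.
  by exists m; split=> //; exists v0.
- by have := @cycles_even cyc isT loop; rewrite /cycle_colour -/vcolour max_y0.
- move=> j /(_ (size p)) [m [le_pm [v [walk_m <-]]]].
  have v_cyc : Some v \in cyc by rewrite -walk_m lasso_walk_tail.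
  by have := leq_bigmax_seq (P := predT) (F := vcolour) _ v_cyc isT; rewrite -/vcolour max_y0.
Qed.

Lemma play_profiles_max s : exists m, is_max (play_profiles F s) m.
Proof.
have [l|no_lasso] := classic (lasso r s).
  by exists PosInf; split; [exact: lasso_won | move=> q _; exact: prof_le_PosInf].
have no_inf f : ~ infinite_play F s f.
  by move=> [f0 ef]; apply: no_lasso; rewrite -f0; exact: walk_lasso ef.
have play_small p : finite_play F s p -> size p <= #|{: VB}|.
  move=> [sp _]; have u : uniq (s :: p).
    by apply/negPn/negP => /(lasso_of_not_uniq sp).
  by have := max_card (mem (s :: p)); rewrite (card_uniqP u) => /ltnW.
have [p0 play_p0] := finite_play_exists no_inf.
have [b [play_b b_max]] := @finite_extremum _ _ (@prof_le d)
  (@prof_le_total d) (@prof_le_trans d)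
  (fun b : #|{: VB}|.-bseq VB => finite_play F s b) (fun b => seq_profile (s :: b))
  (ex_intro _ (Bseq (play_small _ play_p0)) play_p0).
exists (seq_profile (s :: b)); split; first by left; exists b.
move=> q [[p [play_p ->]]|[f [/no_inf]]] //.
exact: (b_max (Bseq (play_small _ play_p))).
Qed.
End Plays.

Section Strategies.
Variables (d : nat) (A : arena d).
Local Notation VB := (option (vert A)).

Lemma union_no_edge_from_bot (sigma tau : {set VB * VB}) :
  sigma \subset E0 A -> tau \subset E1 A -> forall y, ~~ rel_of (sigma :|: tau) None y.
Proof.
move=> s0 t1 y; rewrite /rel_of inE.
by apply/negP => /orP [/(subsetP s0)|/(subsetP t1)]; rewrite inE.
Qed.

Lemma union_cycles_even (sigma tau : {set VB * VB}) :
  reasonable sigma -> tau \subset E1 A ->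
  forall c : seq VB, c != [::] -> cycle (rel_of (sigma :|: tau)) c ->
    ~~ odd (cycle_colour c).
Proof.
move=> rsigma t1 c c0 loop; apply: rsigma c0 _; apply: sub_cycle loop => x y.
by rewrite /rel_of !in_setU => /orP [->|/(subsetP t1) ->]; rewrite ?orbT.
Qed.

Lemma union_edge_total (sigma tau : {set VB * VB}) u :
  strategy0 sigma -> strategy1 tau -> exists y, rel_of (sigma :|: tau) (Some u) y.
Proof.
move=> [_ s0] [_ t1]; case ou: (owner A u).
- by have [y tau_uy] := t1 u ou; exists y; rewrite /rel_of inE tau_uy orbT.
- by have [y sigma_uy] := s0 u (negbT ou); exists y; rewrite /rel_of inE sigma_uy.
Qed.

Lemma play_profiles_subset (sa sb tau : {set VB * VB}) s q :
  strategy0 sa -> strategy0 sb -> strategy1 tau -> sa \subset sb ->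
  play_profiles (sa :|: tau) s q -> play_profiles (sb :|: tau) s q.
Proof.
move=> sa0 sb0 tau1 sab.
have sub : subrel (rel_of (sa :|: tau)) (rel_of (sb :|: tau)).
  by move=> x y; rewrite /rel_of !in_setU => /orP [/(subsetP sab) ->|->]; rewrite ?orbT.
move=> [[p [[sp p_stuck] ->]]|[f [[f0 ef] won]]]; last first.
  by right; exists f; split=> //; split=> // n; apply: sub.
left; exists p; split=> //; split; first exact: sub_path sp.
case last_p: (last s p) => [u|]; last exact: union_no_edge_from_bot (proj1 sb0) (proj1 tau1).
by have [y] := union_edge_total u sa0 tau1; have := p_stuck y; rewrite last_p => /negbTE ->.
Qed.

Lemma strategy1_exists : exists tau : {set VB * VB}, strategy1 tau.
Proof.
pose succ u := odflt u [pick w | edge A u w].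
have succP u : edge A u (succ u).
  rewrite /succ; case: pickP => // no_succ.
  by have [w uw] := edge_total u; move: (no_succ w); rewrite uw.
exists [set e : VB * VB | if e is (Some u, Some w) then owner A u && (w == succ u)
                          else false]; split.
- apply/subsetP => [[[u|] [w|]]]; rewrite !inE //= => /andP [-> /eqP ->].
  exact: succP.
- by move=> u ou; exists (Some (succ u)); rewrite inE ou eqxx.
Qed.

Lemma valuation_min_exists (sigma : {set VB * VB}) v :
  exists m, is_min (fun q => exists tau, strategy1 tau /\
                       q = pmax (play_profiles (sigma :|: tau) (Some v))) m.
Proof.
have [tau [tau1 tau_min]] := @finite_extremum _ _ (fun a b => prof_le b a)
  (fun a b => prof_le_total b a) (fun a b c ba cb => prof_le_trans cb ba)
  (@strategy1 d A) (fun tau => pmax (play_profiles (sigma :|: tau) (Some v)))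
  strategy1_exists.
by exists (pmax (play_profiles (sigma :|: tau) (Some v))); split;
  [exists tau | move=> q [tau' [tau'1 ->]]; exact: tau_min].
Qed.

Lemma is_max_pmax_plays (sigma tau : {set VB * VB}) s :
  strategy0 sigma -> reasonable sigma -> strategy1 tau ->
  is_max (play_profiles (sigma :|: tau) s) (pmax (play_profiles (sigma :|: tau) s)).
Proof.
move=> [s0 _] rsigma [t1 _].
have [m] := play_profiles_max (union_no_edge_from_bot s0 t1) (union_cycles_even rsigma t1) s.
exact: is_max_pmax.
Qed.
End Strategies.

Theorem mainTheorem12 (d : nat) (A : arena d)
  (sa sb : {set option (vert A) * option (vert A)}) :
  strategy0 sa -> strategy0 sb -> reasonable sa -> reasonable sb ->
  sa \subset sb ->
  forall s : option (vert A), prof_le (valuation sa s) (valuation sb s).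
Proof.
move=> sa0 sb0 ra rb sab [v|]; last by left.
have [ma /is_min_pmin [_ ma_min]] := valuation_min_exists sa v.
have [mb /is_min_pmin [[tb [tb1 Vb]] _]] := valuation_min_exists sb v.
rewrite /valuation Vb.
apply: prof_le_trans (ma_min _ (ex_intro _ tb (conj tb1 erefl))) _.
apply: is_max_le (is_max_pmax_plays _ sa0 ra tb1) (is_max_pmax_plays _ sb0 rb tb1).
by move=> q; apply: play_profiles_subset.
Qed.
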